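(* Let $m>n$ be positive integers and let $G[V_1,V_2]$ be a balanced bipartite graph on $2(m+n-1)$ vertices (so $|V_1|=|V_2|=m+n-1$) with minimum degree $\delta(G)>\frac{3}{4}(m+n-1)$. Then for every red-blue coloring of the edges of $G$, either there is a connected component $C$ of the red subgraph with $|V(C)\cap V_1|\ge m$ and $|V(C)\cap V_2|\ge m$, or there is a connected component $C$ of the blue subgraph with $|V(C)\cap V_1|\ge n$ and $|V(C)\cap V_2|\ge n$.
   Context: For a red-blue edge coloring of $G$, the red subgraph (resp. blue subgraph) is the spanning subgraph of $G$ consisting of all red (resp. blue) edges; a red (blue) component is a connected component of this spanning subgraph. *)

From mathcomp Require Import all_boot.
Set Implicit Arguments. Unset Strict Implicit. Unset Printing Implicit Defensive.

Definition simple_graph (T : finType) (e : rel T) : Prop :=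
  symmetric e /\ irreflexive e.

Definition bipartite_with (T : finType) (e : rel T) (V1 V2 : {set T}) : Prop :=
  [disjoint V1 & V2] /\ V1 :|: V2 = [set: T] /\
  (forall x y, e x y -> (x \in V1) = (y \in V2)).

Definition deg (T : finType) (e : rel T) (v : T) : nat := #|[set u | e v u]|.

(* A red-blue edge coloring: a symmetric map on pairs; true = red, false = blue.
   Only its values on edges matter. *)
Definition edge_coloring (T : finType) (c : T -> T -> bool) : Prop := symmetric c.

Definition red_sub (T : finType) (e : rel T) (c : T -> T -> bool) : rel T :=
  fun x y => e x y && c x y.
Definition blue_sub (T : finType) (e : rel T) (c : T -> T -> bool) : rel T :=
  fun x y => e x y && ~~ c x y.

Definition component (T : finType) (r : rel T) (x : T) : {set T} :=
  [set y | connect r x y].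

Definition has_big_component (T : finType) (r : rel T) (V1 V2 : {set T}) (k : nat) : Prop :=
  exists x : T, k <= #|component r x :&: V1| /\ k <= #|component r x :&: V2|.

From mathcomp Require Import all_boot zify.
Set Implicit Arguments. Unset Strict Implicit. Unset Printing Implicit Defensive.

(* Write N = m + n - 1.  Every vertex misses fewer than N/4 vertices of the
   other side, so two vertices of one side have a common neighbour in any set
   of at least N/2 vertices of the other side.  Hence if all edges between
   P, with |P| >= N/2, and Q on the other side have one colour, then Q lies in a
   single component of that colour.  Applied to the edges leaving a component,
   this shows that a red component with m vertices on one side, or a blue one
   with N/2 vertices on one side, already gives the conclusion.  Otherwise every
   red component meets each side in more than N/2 vertices, which is impossible
   for two distinct red components. *)

Local Notation nbhd e u := [set z | e u z].

Lemma has_big_component_swap (T : finType) (r : rel T) V1 V2 k :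
  has_big_component r V2 V1 k -> has_big_component r V1 V2 k.
Proof. by case=> x [le2 le1]; exists x. Qed.

Lemma has_big_componentP (T : finType) (r : rel T) V1 V2 k :
  reflect (has_big_component r V1 V2 k)
    [exists x, (k <= #|component r x :&: V1|) && (k <= #|component r x :&: V2|)].
Proof.
apply: (iffP existsP) => -[x]; first by case/andP; exists x.
by case=> le1 le2; exists x; rewrite le1 le2.
Qed.

Lemma component_eq (T : finType) (r : rel T) x y :
  symmetric r -> y \in component r x -> component r y = component r x.
Proof.
move=> sym_r; rewrite inE => rxy.
by apply/setP => z; rewrite !inE (same_connect (sym_connect_sym sym_r) rxy).
Qed.

Lemma component_disjoint (T : finType) (r : rel T) x x' :
  symmetric r -> x' \notin component r x -> component r x :&: component r x' = set0.
Proof.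
move=> sym_r x'C; apply/setP => z; rewrite !inE; apply/negP => /andP[rxz rx'z].
by case/negP: x'C; rewrite inE (connect_trans rxz) // (sym_connect_sym sym_r).
Qed.

Record dense_bipartite (T : finType) (e : rel T) (V1 V2 : {set T}) (N : nat) : Prop :=
  DenseBipartite {
    dense_sym : symmetric e;
    dense_cross : forall x y, e x y -> (x \in V1) = (y \in V2);
    dense_card1 : #|V1| = N;
    dense_card2 : #|V2| = N;
    dense_deg : forall v, 3 * N < 4 * deg e v }.

Lemma dense_bipartite_swap (T : finType) (e : rel T) V1 V2 N :
  dense_bipartite e V1 V2 N -> dense_bipartite e V2 V1 N.
Proof.
case=> sym_e cross card1 card2 deg_gt; split=> // x y exy.
by rewrite (cross y x) // sym_e.
Qed.

Section Neighbourhoods.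

Variables (T : finType) (e : rel T) (V1 V2 : {set T}) (N : nat).
Hypothesis G : dense_bipartite e V1 V2 N.

Lemma nbhd_sub u : u \in V1 -> nbhd e u \subset V2.
Proof.
by move=> uV1; apply/subsetP => z; rewrite inE => euz; rewrite -(dense_cross G euz).
Qed.

Lemma card_non_nbhd_lt u (S : {set T}) :
  u \in V1 -> S \subset V2 -> 4 * #|S :\: nbhd e u| < N.
Proof.
move=> uV1 SV2; have nbV2 := nbhd_sub uV1.
have /subset_leq_card : S :\: nbhd e u \subset V2 :\: nbhd e u by apply: setSD.
have := cardsID (nbhd e u) V2; rewrite (setIidPr nbV2) (dense_card2 G).
have := dense_deg G u; rewrite /deg; lia.
Qed.

Lemma exists_nbhd_in u (S : {set T}) :
  u \in V1 -> S \subset V2 -> N <= 4 * #|S| -> exists2 z, z \in S & e u z.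
Proof.
move=> uV1 SV2 leNS.
have non_nbhd := card_non_nbhd_lt uV1 SV2; have splitS := cardsID (nbhd e u) S.
have [z] : exists z, z \in S :&: nbhd e u by apply/card_gt0P; lia.
by rewrite !inE => /andP[zS euz]; exists z.
Qed.

Lemma exists_common_nbhd u u' (S : {set T}) :
  u \in V1 -> u' \in V1 -> S \subset V2 -> N <= 2 * #|S| ->
  exists2 z, z \in S & e u z && e u' z.
Proof.
move=> uV1 u'V1 SV2 leNS.
have non_nbhd := card_non_nbhd_lt uV1 SV2; have non_nbhd' := card_non_nbhd_lt u'V1 SV2.
have [|z zS] := subsetPn (_ : ~~ (S \subset (S :\: nbhd e u) :|: (S :\: nbhd e u'))).
  apply/negP => /subset_leq_card.
  have := leq_card_setU (S :\: nbhd e u) (S :\: nbhd e u'); case=> + _; lia.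
by rewrite !inE zS !andbT negb_or !negbK => /andP[euz eu'z]; exists z; rewrite ?euz.
Qed.

End Neighbourhoods.

Section Cuts.

Variables (T : finType) (e X : rel T) (N : nat).
Hypothesis sym_X : symmetric X.

Definition coloured_cut (P Q : {set T}) := {in P & Q, forall p q, e p q -> X p q}.

Lemma coloured_cutC P Q : symmetric e -> coloured_cut P Q -> coloured_cut Q P.
Proof. by move=> sym_e cutPQ q p qQ pP eqp; rewrite sym_X cutPQ // sym_e. Qed.

Lemma component_cut (Y : rel T) x (A1 A2 : {set T}) :
  (forall a b, e a b -> Y a b || X a b) ->
  coloured_cut (component Y x :&: A1) (A2 :\: component Y x).
Proof.
move=> cover p q; rewrite !inE => /andP[Yxp _] /andP[Yxq _] epq.
case/orP: (cover _ _ epq) => // Ypq.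
by rewrite (connect_trans Yxp (connect1 Ypq)) in Yxq.
Qed.

Lemma cut_connected (V1 V2 P Q : {set T}) q0 :
  dense_bipartite e V1 V2 N -> P \subset V1 -> Q \subset V2 -> N <= 2 * #|P| ->
  coloured_cut P Q -> q0 \in Q -> Q \subset component X q0.
Proof.
move=> G PV1 QV2 leNP cutPQ q0Q; apply/subsetP => q qQ; rewrite inE.
have cutQP := coloured_cutC (dense_sym G) cutPQ.
have [p pP /andP[eq0p eqp]] := exists_common_nbhd (dense_bipartite_swap G)
  (subsetP QV2 _ q0Q) (subsetP QV2 _ qQ) PV1 leNP.
apply: (connect_trans (y := p)); apply: connect1; first exact: cutQP.
by rewrite sym_X; apply: cutQP.
Qed.

Lemma cut_connected_quarter (V1 V2 P Q : {set T}) q0 :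
  dense_bipartite e V1 V2 N -> P \subset V1 -> Q \subset V2 ->
  N <= 2 * #|Q| -> N <= 4 * #|P| ->
  coloured_cut P Q -> q0 \in Q -> Q \subset component X q0.
Proof.
move=> G PV1 QV2 leNQ leNP cutPQ q0Q.
have G' := dense_bipartite_swap G; have cutQP := coloured_cutC (dense_sym G) cutPQ.
have nbhdP q : q \in Q -> exists2 p, p \in P & e q p :=
  fun qQ => exists_nbhd_in G' (subsetP QV2 _ qQ) PV1 leNP.
have [p0 p0P eq0p0] := nbhdP _ q0Q.
have /subsetP PC := cut_connected G' QV2 PV1 leNQ cutQP p0P.
apply/subsetP => q qQ; have [p pP eqp] := nbhdP _ qQ.
have := PC _ pP; rewrite !inE => Xp0p.
apply: (connect_trans (connect1 (cutQP _ _ q0Q p0P eq0p0))).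
by apply: (connect_trans Xp0p); apply: connect1; rewrite sym_X; apply: cutQP.
Qed.

End Cuts.

Section Colouring.

Variables (T : finType) (e R B : rel T).
Hypotheses (sym_R : symmetric R) (sym_B : symmetric B).
Hypothesis cover : forall a b, e a b -> R a b || B a b.

Let cover_BR a b : e a b -> B a b || R a b.
Proof. by rewrite orbC; apply: cover. Qed.

Lemma red_component_quarter (V1 V2 : {set T}) N x :
  dense_bipartite e V1 V2 N -> (forall y, 2 * #|component B y :&: V2| < N) ->
  x \in V1 -> N < 4 * #|component R x :&: V2|.
Proof.
move=> G smallB xV1.
have /subset_leq_card :
    nbhd e x \subset (component R x :&: V2) :|: (component B x :&: V2).
  apply/subsetP => z; rewrite !inE => exz; rewrite -(dense_cross G exz) xV1 !andbT.
  by case/orP: (cover exz) => Exz; apply/orP; [left|right]; apply: connect1.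
have := leq_card_setU (component R x :&: V2) (component B x :&: V2); case=> + _.
have := dense_deg G x; have := smallB x; rewrite /deg; lia.
Qed.

Lemma red_component_half (V1 V2 : {set T}) N x :
  dense_bipartite e V1 V2 N ->
  (forall y, 2 * #|component B y :&: V1| < N) ->
  (forall y, 2 * #|component B y :&: V2| < N) ->
  x \in V1 -> N < 2 * #|component R x :&: V2|.
Proof.
move=> G smallB1 smallB2 xV1; rewrite ltnNge; apply/negP => leC2.
have quarter2 := red_component_quarter G smallB2 xV1.
set C := component R x in leC2 quarter2.
have [y] : exists y, y \in C :&: V2 by apply/card_gt0P; lia.
rewrite inE => /andP[Cy yV2].
have := red_component_quarter (dense_bipartite_swap G) smallB1 yV2.
rewrite (component_eq sym_R Cy) -/C => quarter1.
set Q := V2 :\: C.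
have splitV2 : #|C :&: V2| + #|Q| = N by rewrite setIC cardsID (dense_card2 G).
have QV2 : Q \subset V2 := subsetDl V2 C.
have cutCQ : coloured_cut e B (C :&: V1) Q := component_cut cover.
have [q0 q0Q] : exists q0, q0 \in Q by apply/card_gt0P; lia.
have /subset_leq_card : Q \subset component B q0 :&: V2.
  rewrite subsetI QV2 andbT.
  by apply: (cut_connected_quarter sym_B G (subsetIr C V1) QV2 _ _ cutCQ q0Q); lia.
have := smallB2 q0; lia.
Qed.

Section Sizes.

Variables m n : nat.
Hypotheses (n_gt0 : 0 < n) (ltn_nm : n < m).

Local Notation N := (m + n - 1).
Local Notation outcome V1 V2 :=
  (has_big_component R V1 V2 m \/ has_big_component B V1 V2 n).

Lemma outcome_swap (V1 V2 : {set T}) : outcome V2 V1 -> outcome V1 V2.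
Proof. by case=> /has_big_component_swap; [left|right]. Qed.

Lemma big_red_component (V1 V2 : {set T}) x :
  dense_bipartite e V1 V2 N -> m <= #|component R x :&: V1| -> outcome V1 V2.
Proof.
move=> G leC1; set C := component R x in leC1.
have [leC2|ltC2] := leqP m #|C :&: V2|; first by left; exists x.
set P := C :&: V1 in leC1 *; set Q := V2 :\: C.
have splitV2 : #|C :&: V2| + #|Q| = N by rewrite setIC cardsID (dense_card2 G).
have PV1 : P \subset V1 := subsetIr C V1.
have QV2 : Q \subset V2 := subsetDl V2 C.
have cutPQ : coloured_cut e B P Q := component_cut cover.
have [q0 q0Q] : exists q0, q0 \in Q by apply/card_gt0P; lia.
have /subsetP QD : Q \subset component B q0.
  by apply: (cut_connected sym_B G PV1 QV2 _ cutPQ q0Q); lia.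
right; exists q0; split; last first.
  have /subset_leq_card : Q \subset component B q0 :&: V2.
    by apply/subsetP => q qQ; rewrite inE QD // (subsetP QV2).
  lia.
have [leNQ|ltQN] := leqP N (4 * #|Q|).
  have /subset_leq_card : P \subset component B q0 :&: V1.
    apply/subsetP => p pP; rewrite inE (subsetP PV1) // andbT.
    have [q qQ epq] := exists_nbhd_in G (subsetP PV1 _ pP) QV2 leNQ.
    have := QD _ qQ; rewrite !inE => /connect_trans; apply.
    by apply: connect1; rewrite sym_B; apply: cutPQ.
  lia.
(* Now 4|Q| < N forces m > 3n + 1, so q0 alone has n neighbours in P. *)
have /subset_leq_card : P :&: nbhd e q0 \subset component B q0 :&: V1.
  apply/subsetP => p; rewrite in_setI => /andP[pP]; rewrite inE => eq0p.
  rewrite inE (subsetP PV1) // andbT inE.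
  by apply: connect1; rewrite sym_B; apply: cutPQ; rewrite // (dense_sym G).
have := card_non_nbhd_lt (dense_bipartite_swap G) (subsetP QV2 _ q0Q) PV1.
have := cardsID (nbhd e q0) P; lia.
Qed.

Lemma big_blue_component (V1 V2 : {set T}) x :
  dense_bipartite e V1 V2 N -> N <= 2 * #|component B x :&: V1| -> outcome V1 V2.
Proof.
move=> G leD1; set D := component B x in leD1.
have [leD2|ltD2] := leqP n #|D :&: V2|.
  by right; exists x; rewrite -/D; split=> //; lia.
set Q := V2 :\: D.
have splitV2 : #|D :&: V2| + #|Q| = N by rewrite setIC cardsID (dense_card2 G).
have [q0 q0Q] : exists q0, q0 \in Q by apply/card_gt0P; lia.
have QV2 : Q \subset V2 := subsetDl V2 D.
have cutDQ : coloured_cut e R (D :&: V1) Q := component_cut cover_BR.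
have /subset_leq_card : Q \subset component R q0 :&: V2.
  rewrite subsetI QV2 andbT.
  exact: (cut_connected sym_R G (subsetIr D V1) QV2 leD1 cutDQ q0Q).
move=> leQ; have : m <= #|component R q0 :&: V2| by lia.
by move/(big_red_component (dense_bipartite_swap G))/outcome_swap.
Qed.

Lemma dense_bipartite_outcome (V1 V2 : {set T}) :
  dense_bipartite e V1 V2 N -> outcome V1 V2.
Proof.
move=> G; have G' := dense_bipartite_swap G.
case: (has_big_componentP R V1 V2 m) => [|noR]; first by left.
case: (has_big_componentP B V1 V2 n) => [|noB]; first by right.
have no_outcome : ~ outcome V1 V2 by case.
have smallR x : #|component R x :&: V1| < m.
  by rewrite ltnNge; apply/negP => /(big_red_component G).
have smallB1 x : 2 * #|component B x :&: V1| < N.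
  by rewrite ltnNge; apply/negP => /(big_blue_component G).
have smallB2 x : 2 * #|component B x :&: V2| < N.
  by rewrite ltnNge; apply/negP => /(big_blue_component G')/outcome_swap.
have halfR := red_component_half G smallB1 smallB2.
have [x xV1] : exists x, x \in V1 by apply/card_gt0P; rewrite (dense_card1 G); lia.
have [x' x'V1 x'C] : exists2 x', x' \in V1 & x' \notin component R x.
  apply/subsetPn/negP => /setIidPr V1C.
  by have := smallR x; rewrite V1C (dense_card1 G); lia.
have := cardsUI (component R x :&: V2) (component R x' :&: V2).
rewrite setIACA (component_disjoint sym_R x'C) set0I cards0.
have /subset_leq_card : (component R x :&: V2) :|: (component R x' :&: V2) \subset V2.
  by rewrite subUset !subsetIr.
have := halfR _ xV1; have := halfR _ x'V1; rewrite (dense_card2 G); lia.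
Qed.

End Sizes.

End Colouring.

Theorem lemma2p1 (m n : nat) (T : finType) (e : rel T) (V1 V2 : {set T})
  (c : T -> T -> bool) :
  0 < n -> n < m ->
  simple_graph e ->
  bipartite_with e V1 V2 ->
  #|V1| = m + n - 1 -> #|V2| = m + n - 1 ->
  (forall v : T, 3 * (m + n - 1) < 4 * deg e v) ->
  edge_coloring c ->
  has_big_component (red_sub e c) V1 V2 m \/ has_big_component (blue_sub e c) V1 V2 n.
Proof.
move=> n_gt0 ltn_nm [sym_e _] [_ [_ cross]] card1 card2 deg_gt sym_c.
have G : dense_bipartite e V1 V2 (m + n - 1) by split.
apply: dense_bipartite_outcome G => // [x y|x y|a b eab].
- by rewrite /red_sub sym_e sym_c.
- by rewrite /blue_sub sym_e sym_c.
- by rewrite /red_sub /blue_sub eab; case: (c a b).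
Qed.
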